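(* Let $\mathbb{F}_q$ be a finite field of order $q$ and $m\ge2$. Then the optimal winning probabilities of the multiplication games over $\mathbb{F}_q$ satisfy $$\omega_m\le\frac{1+\sqrt{1+4q(q-1)\,\omega_{m-1}}}{2q}.$$
   Context: For $r\ge1$, the $r$-player ''Number on the Forehead'' multiplication game over $\mathbb{F}_q$: inputs $X_1,\dots,X_r$ are independent and uniform on $\mathbb{F}_q$; player $k$ sees all inputs except $X_k$ (denoted $X_{[r]\setminus\{k\}}$) and outputs $Y_k=f_k(X_{[r]\setminus\{k\}})$ for a function $f_k:\mathbb{F}_q^{r-1}\to\mathbb{F}_q$ (for $r=1$ this is a constant). The game is won iff $\prod_{k=1}^rX_k=\sum_{k=1}^rY_k$. Define $\omega_r(f_1,\dots,f_r)=\Pr[\prod_{k=1}^rX_k=\sum_{k=1}^rf_k(X_{[r]\setminus\{k\}})]$ and $\omega_r=\max_{f_1,\dots,f_r}\omega_r(f_1,\dots,f_r)$, the maximum over all functions $\mathbb{F}_q^{r-1}\to\mathbb{F}_q$. *)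

From mathcomp Require Import all_boot all_order all_algebra all_field.
Set Implicit Arguments. Unset Strict Implicit. Unset Printing Implicit Defensive.
Import Order.TTheory GRing.Theory Num.Theory.
Local Open Scope ring_scope.

(* A strategy profile assigns to each
   player k a function of the full input vector, required to be independent
   of the coordinate x_k (player k sees X_{[r]\{k}} only). *)

Definition input (F : finFieldType) (r : nat) := {ffun 'I_r -> F}.
Definition profile (F : finFieldType) (r : nat) :=
  {ffun 'I_r -> {ffun input F r -> F}}.

Definition valid_profile (F : finFieldType) (r : nat) (f : profile F r) : bool :=
  [forall k : 'I_r, forall x : input F r, forall y : input F r,
     [forall j : 'I_r, (j != k) ==> (x j == y j)] ==> (f k x == f k y)].

Definition wins (F : finFieldType) (r : nat) (f : profile F r) (x : input F r) : bool :=
  (\prod_(k < r) x k) == \sum_(k < r) f k x.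

Definition win_count (F : finFieldType) (r : nat) (f : profile F r) : nat :=
  #|[set x : input F r | wins f x]|.

Definition omega_f (R : realFieldType) (F : finFieldType) (r : nat) (f : profile F r) : R :=
  (win_count f)%:R / (#|F| ^ r)%:R.

Definition omega (R : realFieldType) (F : finFieldType) (r : nat) : R :=
  (\max_(f : profile F r | valid_profile f) win_count f)%:R / (#|F| ^ r)%:R.

From mathcomp Require Import all_boot all_order all_algebra all_field.
From mathcomp Require Import ring lra.
Set Implicit Arguments. Unset Strict Implicit. Unset Printing Implicit Defensive.
Import Order.TTheory GRing.Theory Num.Theory.

(* Fix an optimal profile f for m = n+1 players and, for each
   y in F^n, let N(y) be the number of values c of the last input for which f
   wins on (y, c), so that the optimal count is W = sum_y N(y).  If f wins on
   both (y, a) and (y, b) with a <> b, subtracting the two winning equations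
   eliminates the last player (whose output does not depend on c) and leaves
   y_1 ... y_n = sum_k (f_k(y, a) - f_k(y, b)) / (a - b): an n-player profile
   winning on y.  Hence the ordered pairs a <> b contribute at most
   q (q - 1) M_n to sum_y N(y)^2 = W + sum_{a <> b} #{y | both win}, and
   Cauchy-Schwarz W^2 <= q^n sum_y N(y)^2 gives
   q w^2 - w <= (q - 1) omega_n for w = omega_{n+1}; solve the quadratic. *)

Definition max_win_count (F : finFieldType) (r : nat) : nat :=
  \max_(f : profile F r | valid_profile f) win_count f.

Lemma valid_profileP (F : finFieldType) (r : nat) (f : profile F r) (k : 'I_r)
    (x y : input F r) :
  valid_profile f -> (forall j, j != k -> x j = y j) -> f k x = f k y.
Proof.
move=> /forallP /(_ k) /forallP /(_ x) /forallP /(_ y) /implyP fkxy xy.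
by apply/eqP/fkxy; apply/forallP => j; apply/implyP => /xy ->.
Qed.

Lemma finField_card_gt0 (F : finFieldType) : 0 < #|F|.
Proof. by apply/card_gt0P; exists 0%R. Qed.

Lemma exists_optimal_profile (F : finFieldType) (r : nat) :
  exists2 f : profile F r, valid_profile f & win_count f = max_win_count F r.
Proof.
have [|f vf max_f] := @eq_bigmax_cond _ (@valid_profile F r) (@win_count F r).
  apply/card_gt0P; exists [ffun=> [ffun=> 0%R : F]]; rewrite unfold_in.
  by apply/'forall_'forall_forallP => k x y; apply/implyP => _; rewrite !ffunE.
by exists f; last exact/esym.
Qed.

Section LastCoordinate.
Variables (F : finFieldType) (n : nat).
Implicit Types (f : profile F n.+1) (y : input F n).

Definition extend_input y (c : F) : input F n.+1 :=
  [ffun i => if unlift ord_max i is Some j then y j else c].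

Lemma extend_input_max y c : extend_input y c ord_max = c.
Proof. by rewrite ffunE unlift_none. Qed.

Lemma extend_input_lift y c j : extend_input y c (lift ord_max j) = y j.
Proof. by rewrite ffunE liftK. Qed.

Definition fiber_win_count f y : nat := \sum_(c : F) wins f (extend_input y c).

Lemma win_count_fiber_sum f : win_count f = \sum_y fiber_win_count f y.
Proof.
rewrite /win_count -sum1_card big_mkcond /= pair_big /=.
rewrite (reindex (fun p : input F n * F => extend_input p.1 p.2)) /=.
  by apply: eq_bigr => p _; rewrite inE; case: wins.
exists (fun x => ([ffun j => x (lift ord_max j)], x ord_max)).
  move=> [y c] _ /=; rewrite extend_input_max; congr pair.
  by apply/ffunP => j; rewrite ffunE extend_input_lift.
move=> x _; apply/ffunP => i; case: (unliftP ord_max i) => [j ->| ->].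
  by rewrite extend_input_lift ffunE.
by rewrite extend_input_max.
Qed.

End LastCoordinate.

Section DifferenceProfile.
Variables (F : finFieldType) (n : nat).
Implicit Types (f : profile F n.+1) (y : input F n).
Local Open Scope ring_scope.

Lemma wins_extend_input f y c :
  wins f (extend_input y c) = ((\prod_(k < n) y k) * c ==
    \sum_(k < n) f (lift ord_max k) (extend_input y c)
      + f ord_max (extend_input y c)).
Proof.
have widen_lift (k : 'I_n) : widen_ord (leqnSn n) k = lift ord_max k.
  by apply: val_inj; rewrite /= /bump leqNgt ltn_ord.
rewrite /wins !big_ord_recr /= extend_input_max.
under eq_bigr do rewrite widen_lift extend_input_lift.
by under [X in _ == X + _]eq_bigr do rewrite widen_lift.
Qed.

Definition difference_profile f (a b : F) : profile F n :=
  [ffun k => [ffun y => (f (lift ord_max k) (extend_input y a)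
                         - f (lift ord_max k) (extend_input y b)) / (a - b)]].

Lemma valid_difference_profile f a b :
  valid_profile f -> valid_profile (difference_profile f a b).
Proof.
move=> vf; apply/'forall_'forall_forallP => k x y; apply/implyP => /forallP xy.
have ext_eq c : f (lift ord_max k) (extend_input x c)
              = f (lift ord_max k) (extend_input y c).
  apply: valid_profileP vf _ => j; case: (unliftP ord_max j) => [j' ->|->] hj.
    rewrite !extend_input_lift; apply/eqP; move/implyP: (xy j'); apply.
    by rewrite -(inj_eq (@lift_inj _ ord_max)).
  by rewrite !extend_input_max.
by rewrite !ffunE !ext_eq.
Qed.

Lemma wins_difference_profile f a b y : valid_profile f -> a != b ->
  wins f (extend_input y a) -> wins f (extend_input y b) ->
  wins (difference_profile f a b) y.
Proof.
move=> vf ab; rewrite !wins_extend_input => /eqP wa /eqP wb.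
have last_eq : f ord_max (extend_input y a) = f ord_max (extend_input y b).
  apply: valid_profileP vf _ => j; case: (unliftP ord_max j) => [j' ->|->].
    by rewrite !extend_input_lift.
  by rewrite eqxx.
rewrite /wins; apply/eqP; symmetry; under eq_bigr do rewrite !ffunE.
rewrite -mulr_suml sumrB.
have -> : \sum_(k < n) f (lift ord_max k) (extend_input y a)
        - \sum_(k < n) f (lift ord_max k) (extend_input y b)
        = (\prod_(k < n) y k) * (a - b).
  by rewrite mulrBr wa wb last_eq; ring.
by rewrite mulfK // subr_eq0.
Qed.

End DifferenceProfile.

Section FiberCount.
Variables (F : finFieldType) (n : nat).
Implicit Types (f : profile F n.+1) (y : input F n).

Lemma common_wins_le_max f a b : valid_profile f -> a != b ->
  \sum_y (wins f (extend_input y a) && wins f (extend_input y b))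
    <= max_win_count F n.
Proof.
move=> vf ab; apply: leq_trans (leq_bigmax_cond _ (valid_difference_profile a b vf)).
rewrite /win_count -sum1_card [leqRHS]big_mkcond /=; apply: leq_sum => y _.
rewrite inE; case: (boolP (wins f _)) => //= wa; case: (boolP (wins f _)) => //= wb.
by rewrite wins_difference_profile.
Qed.

Lemma sum_fiber_sqr_le f : valid_profile f ->
  \sum_y fiber_win_count f y ^ 2
    <= win_count f + #|F| * #|F|.-1 * max_win_count F n.
Proof.
move=> vf.
have fiber_sqr y : fiber_win_count f y ^ 2 = fiber_win_count f y
    + \sum_(a : F) \sum_(b | b != a)
        (wins f (extend_input y a) && wins f (extend_input y b)).
  rewrite -mulnn -big_split big_distrl /=; apply: eq_bigr => a _.
  rewrite big_distrr /= (bigD1 a) //= mulnn; congr addn; first by case: wins.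
  by apply: eq_bigr => b _; case: wins; case: wins.
rewrite (eq_bigr _ (fun y _ => fiber_sqr y)) big_split /= -win_count_fiber_sum.
rewrite leq_add2l exchange_big /=.
under eq_bigr do rewrite exchange_big /=.
rewrite -mulnA -sum_nat_const.
apply: leq_sum => a _; rewrite -(cardC1 a) -sum_nat_const.
by apply: leq_sum => b ba; apply: common_wins_le_max; rewrite // eq_sym.
Qed.

End FiberCount.

Lemma sqr_sum_le_card_mul_sum_sqr (I : finType) (G : I -> nat) :
  (\sum_i G i) ^ 2 <= #|I| * \sum_i G i ^ 2.
Proof.
rewrite -(leq_pmul2l (isT : 0 < 2)) -mulnn big_distrl /= big_distrr /=.
apply: (@leq_trans (\sum_i \sum_j (G i ^ 2 + G j ^ 2))).
  apply: leq_sum => i _; rewrite big_distrr /= big_distrr /=.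
  by apply: leq_sum => j _; exact: (nat_Cauchy (G i) (G j)).1.
under eq_bigr do rewrite big_split /= sum_nat_const.
by rewrite big_split /= sum_nat_const -big_distrr /= addnn mul2n.
Qed.

Lemma win_count_sqr_le (F : finFieldType) (n : nat) (f : profile F n.+1) :
  valid_profile f ->
  win_count f ^ 2
    <= #|F| ^ n * (win_count f + #|F| * #|F|.-1 * max_win_count F n).
Proof.
move=> vf; have := sqr_sum_le_card_mul_sum_sqr (fiber_win_count f).
rewrite -win_count_fiber_sum card_ffun card_ord => /leq_trans; apply.
by rewrite leq_mul2l sum_fiber_sqr_le // orbT.
Qed.

Local Open Scope ring_scope.

Lemma le_quadratic_root (R : rcfType) (a w c : R) :
  0 < a -> a * w ^+ 2 - w <= c -> w <= (1 + Num.sqrt (1 + 4 * a * c)) / (2 * a).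
Proof.
move=> a_gt0 quad_le.
have sqr_le : (2 * a * w - 1) ^+ 2 <= 1 + 4 * a * c.
  have -> : (2 * a * w - 1) ^+ 2 = 1 + 4 * a * (a * w ^+ 2 - w) by ring.
  by rewrite lerD2l ler_pM2l // mulr_gt0.
have le_sqrt : 2 * a * w - 1 <= Num.sqrt (1 + 4 * a * c).
  apply: le_trans (ler_norm _) _.
  by rewrite -sqrtr_sqr ler_sqrt // (le_trans (sqr_ge0 _) sqr_le).
rewrite ler_pdivlMr ?mulr_gt0 //; lra.
Qed.

Lemma omega_quadratic_bound (R : realFieldType) (F : finFieldType) (n : nat) :
  #|F|%:R * omega R F n.+1 ^+ 2 - omega R F n.+1
    <= (#|F|%:R - 1) * omega R F n.
Proof.
rewrite /omega -/(max_win_count F n.+1) -/(max_win_count F n).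
have [f vf <-] := exists_optimal_profile F n.+1.
have := win_count_sqr_le vf; rewrite -(ler_nat R).
have pred_q : #|F|.-1%:R = #|F|%:R - 1 :> R.
  by rewrite -[in RHS](prednK (finField_card_gt0 F)) -natr1 addrK.
rewrite natrX natrM natrD natrM [(#|F| * _)%:R]natrM pred_q expnSr natrM.
set W := (win_count f)%:R; set Q := (#|F| ^ n)%:R; set q := #|F|%:R.
set M := (max_win_count F n)%:R => count_le.
have Q_gt0 : 0 < Q by rewrite ltr0n expn_gt0 finField_card_gt0.
have q_gt0 : 0 < q by rewrite ltr0n finField_card_gt0.
rewrite -subr_le0.
have -> : q * (W / (Q * q)) ^+ 2 - W / (Q * q) - (q - 1) * (M / Q)
        = (W ^+ 2 - Q * (W + q * (q - 1) * M)) / (Q ^+ 2 * q).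
  by field; rewrite (gt_eqF q_gt0) (gt_eqF Q_gt0).
by rewrite ler_pdivrMr ?mulr_gt0 ?exprn_gt0 // mul0r subr_le0.
Qed.

Theorem propositionB2 (R : rcfType) (F : finFieldType) (m : nat) :
  (2 <= m)%N ->
  omega R F m <=
    (1 + Num.sqrt (1 + 4 * (#|F|)%:R * ((#|F|)%:R - 1) * omega R F m.-1))
    / (2 * (#|F|)%:R).
Proof.
case: m => [|n] // _; rewrite -[4 * _ * _ * _]mulrA.
apply: le_quadratic_root; last exact: omega_quadratic_bound.
by rewrite ltr0n finField_card_gt0.
Qed.
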